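(* Consider an interventional factor model (IFM) with factor structure $\{(S_k, F_k)\}_{k=1}^{l}$ over intervention variables $\sigma = (\sigma_1, \dots, \sigma_d)$, and suppose its $\sigma$-graph $\mathcal G_{\sigma}$ is decomposable. Let $\Sigma_{\mathrm{train}} \subseteq \Sigma$ satisfy the following. For every $k \in \{1, \dots, l\}$ and every assignment $v \in \prod_{i \in F_k} \{0, 1, \dots, \aleph_i - 1\}$, the regime $\sigma$ with $\sigma_{F_k} = v$ and $\sigma_i = 0$ for all $i \notin F_k$ belongs to $\Sigma_{\mathrm{train}}$. Then, for every $\sigma^\star \in \Sigma$, the distribution $p(\cdot\,; \sigma^\star)$ is identified from $\{p(\cdot\,; \sigma) : \sigma \in \Sigma_{\mathrm{train}}\}$.
   Context: **Regimes.** There are $d$ intervention variables $\sigma_1, \dots, \sigma_d$. These are non-random regime indicators. Each $\sigma_i$ takes values in $\{0, 1, \dots, \aleph_i - 1\}$, where $\aleph_i \ge 2$ and the value $0$ denotes the baseline, i.e. no intervention. The regime space is $\Sigma = \prod_{i=1}^d \{0, \dots, \aleph_i - 1\}$. For $A \subseteq [d] = \{1, \dots, d\}$, write $\sigma_A = (\sigma_i)_{i \in A}$. **The random system.** $X = (X_1, \dots, X_m)$ is a random vector with sample space $\mathcal X$. For $S \subseteq [m]$, write $x_S = (x_j)_{j \in S}$. **Interventional factor model (IFM).** An IFM with factor structure $\{(S_k, F_k)\}_{k=1}^l$, where $S_k \subseteq [m]$ and $F_k \subseteq [d]$, is a family of distributions $\{p(\cdot\,; \sigma) : \sigma \in \Sigma\}$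 on $\mathcal X$ whose densities (or probability mass functions) satisfy $$p(x; \sigma) = \frac{1}{Z(\sigma)} \prod_{k=1}^l f_k(x_{S_k}; \sigma_{F_k}).$$ Here each $f_k$ is a strictly positive function of $(x_{S_k}, \sigma_{F_k})$, and $Z(\sigma) \in (0, \infty)$ is the normalizing constant. **$\sigma$-graph.** The $\sigma$-graph $\mathcal G_\sigma$ is the undirected graph with vertex set $\{\sigma_1, \dots, \sigma_d\}$. It has an edge $\sigma_i - \sigma_j$ ($i \ne j$) if and only if $\{i, j\} \subseteq F_k$ for some $k$. **Decomposable graphs.** An undirected graph is decomposable if it is complete, or if its vertex set can be partitioned into $(A, B, C)$ with $A, B$ nonempty, $C$ a clique separating $A$ from $B$, and the induced subgraphs on $A \cup C$ and $B \cup C$ both decomposable. **Identification.** $p(\cdot\,; \sigma^\star)$ is identified from $\Sigma_{\mathrm{train}}$ if the following holds for any two IFMs $p, p'$ with the same factor structure: whenever $p(\cdot\,; \sigma) = p'(\cdot\,; \sigma)$ for all $\sigma \in \Sigma_{\mathrm{train}}$, then $p(\cdot\,; \sigma^\star) = p'(\cdot\,; \sigma^\star)$. *)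

From HB Require Import structures.
From mathcomp Require Import all_boot all_order all_algebra.
From mathcomp Require Import all_classical all_reals all_analysis.
Set Implicit Arguments. Unset Strict Implicit. Unset Printing Implicit Defensive.
Import Order.TTheory GRing.Theory Num.Theory.
Local Open Scope ring_scope.

Definition in_Sigma (d : nat) (aleph : 'I_d -> nat) (sigma : 'I_d -> nat) : Prop :=
  forall i, (sigma i < aleph i)%N.

Definition sigma_edge (d l : nat) (F : 'I_l -> {set 'I_d}) : rel 'I_d :=
  fun i j => (i != j) && [exists k, (i \in F k) && (j \in F k)].

Definition is_clique (d : nat) (e : rel 'I_d) (C : {set 'I_d}) : Prop :=
  forall i j, i \in C -> j \in C -> i != j -> e i j.

Definition separates (d : nat) (e : rel 'I_d) (V A B C : {set 'I_d}) : Prop :=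
  forall (a : 'I_d) (p : seq 'I_d),
    a \in A -> last a p \in B -> path e a p -> all (fun v => v \in V) (a :: p) ->
    has (fun v => v \in C) (a :: p).

Inductive decomposable (d : nat) (e : rel 'I_d) : {set 'I_d} -> Prop :=
| decomp_complete V : is_clique e V -> decomposable e V
| decomp_split (V A B C : {set 'I_d}) :
    A :|: B :|: C = V -> [disjoint A & B] -> [disjoint A & C] -> [disjoint B & C] ->
    A != finset.set0 -> B != finset.set0 -> is_clique e C -> separates e V A B C ->
    decomposable e (A :|: C) -> decomposable e (B :|: C) -> decomposable e V.

Section IFM.
Context (R : realType) (dT : measure_display) (T : measurableType dT).
Context (mu : {measure set T -> \bar R}).
Context (m d l : nat) (Y : 'I_m -> Type) (coord : forall j : 'I_m, T -> Y j).
Context (aleph : 'I_d -> nat) (S : 'I_l -> {set 'I_m}) (F : 'I_l -> {set 'I_d}).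

Definition ifm_prod (f : 'I_l -> T -> ('I_d -> nat) -> R) (x : T) (sigma : 'I_d -> nat) : R :=
  \prod_(k < l) f k x sigma.

Definition ifm_Z (f : 'I_l -> T -> ('I_d -> nat) -> R) (sigma : 'I_d -> nat) : \bar R :=
  (\int[mu]_x (ifm_prod f x sigma)%:E)%E.

Definition ifm_density (f : 'I_l -> T -> ('I_d -> nat) -> R) (sigma : 'I_d -> nat) (x : T) : R :=
  ifm_prod f x sigma / fine (ifm_Z f sigma).

Definition ifm_dist (f : 'I_l -> T -> ('I_d -> nat) -> R) (sigma : 'I_d -> nat) (A : set T) : \bar R :=
  (\int[mu]_(x in A) (ifm_density f sigma x)%:E)%E.

Definition is_IFM (f : 'I_l -> T -> ('I_d -> nat) -> R) : Prop :=
  (forall k x y sigma, in_Sigma aleph sigma ->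
     (forall j, j \in S k -> coord j x = coord j y) -> f k x sigma = f k y sigma) /\
  (forall k x sigma tau, in_Sigma aleph sigma -> in_Sigma aleph tau ->
     (forall i, i \in F k -> sigma i = tau i) -> f k x sigma = f k x tau) /\
  (forall k x sigma, in_Sigma aleph sigma -> 0 < f k x sigma) /\
  (forall k sigma, in_Sigma aleph sigma -> measurable_fun setT (fun x => f k x sigma)) /\
  (forall sigma, in_Sigma aleph sigma ->
     (0 < ifm_Z f sigma)%E /\ (ifm_Z f sigma < +oo)%E).

Definition identified (Strain : ('I_d -> nat) -> Prop) (sigma_star : 'I_d -> nat) : Prop :=
  forall f f' : 'I_l -> T -> ('I_d -> nat) -> R,
    is_IFM f -> is_IFM f' ->
    (forall sigma, Strain sigma -> forall A, measurable A -> ifm_dist f sigma A = ifm_dist f' sigma A) ->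
    forall A, measurable A -> ifm_dist f sigma_star A = ifm_dist f' sigma_star A.

End IFM.

From HB Require Import structures.
From mathcomp Require Import all_boot all_order all_algebra.
From mathcomp Require Import all_classical all_reals all_analysis.
From mathcomp Require Import measurable_realfun.
From mathcomp Require Import ring.

Import Order.TTheory GRing.Theory Num.Theory.
Local Open Scope ring_scope.

(* Fix a target regime sigma_star and two IFMs f, f' that agree on the
   training regimes.  For C a set of intervention variables, let
   sigma_star|C be the regime equal to sigma_star on C and to 0 elsewhere;
   when C is contained in some F_k, sigma_star|C is a training regime, so
   the densities of f and f' agree a.e. at sigma_star|C.  Fix two points
   x, y where all these agreements hold and consider the cross ratio
       r(s) = (p'(x;s)/p(x;s)) / (p'(y;s)/p(y;s)),
   in which the normalising constants cancel.  It is a product over k of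
   factors depending on s only through s_{F_k}, and r(sigma_star|C) = 1
   whenever C is inside some F_k.  A Moebius-type induction on |C|
   (removing one variable i and keeping only the factors with i in F_k)
   gives r(sigma_star) = 1.  Hence the unnormalised products at sigma_star
   are proportional a.e., so are the normalising constants, the densities
   agree a.e., and so do the distributions. *)

Section ProductInduction.
Variables (d l : nat) (K : fieldType).

Lemma prod_split_ratio (P : pred 'I_l) (F : 'I_l -> {set 'I_d})
    (h : 'I_l -> {set 'I_d} -> K) (i : 'I_d) (A B : {set 'I_d}) :
  (forall k C, h k C != 0) ->
  (forall k, i \notin F k -> h k A = h k B) ->
  \prod_(k | P k) h k A =
    \prod_(k | P k) h k B * \prod_(k | P k && (i \in F k)) (h k A / h k B).
Proof.
move=> hnz hAB.
rewrite (bigID (fun k => i \in F k)) /= [X in _ = X * _](bigID (fun k => i \in F k)) /=.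
have -> : \prod_(k | P k && (i \notin F k)) h k A =
          \prod_(k | P k && (i \notin F k)) h k B.
  by apply: eq_bigr => k /andP[_ nk]; rewrite hAB.
have -> : \prod_(k | P k && (i \in F k)) h k A =
          \prod_(k | P k && (i \in F k)) h k B *
          \prod_(k | P k && (i \in F k)) (h k A / h k B).
  by rewrite -big_split /=; apply: eq_bigr => k _; rewrite mulrC divfK.
by rewrite -!mulrA [X in _ * X]mulrC.
Qed.

Lemma setU1_setD1_trace (G C : {set 'I_d}) (i : 'I_d) :
  i \notin G -> (i |: C) :&: G = (C :\ i) :&: G.
Proof.
move=> iG; apply/setP => x; rewrite !inE; case: (eqVneq x i) => [->|] //=.
by rewrite (negbTE iG) ?andbF.
Qed.

(* Induction on the size of C, generalising over the index
   predicate P and the sets F. *)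
Lemma prod_eq1_from_faces_card (n : nat) :
  forall (P : pred 'I_l) (F : 'I_l -> {set 'I_d}) (h : 'I_l -> {set 'I_d} -> K),
  (forall k C, h k C != 0) ->
  (forall k C C', C :&: F k = C' :&: F k -> h k C = h k C') ->
  (forall j (C : {set 'I_d}), P j -> C \subset F j -> \prod_(k | P k) h k C = 1) ->
  forall D : {set 'I_d}, (#|D| <= n)%N -> \prod_(k | P k) h k D = 1.
Proof.
elim: n => [|n IH] P F h hnz htrace hface D hD;
  have prod0 : \prod_(k | P k) h k finset.set0 = 1 by
    case: (pickP P) => [j Pj|noP];
      [apply: (hface j) => //; exact: finset.sub0set | rewrite big_pred0].
  by move: hD; rewrite leqn0 cards_eq0 => /eqP ->.
have [->//|[i iD]] := finset.set_0Vmem D.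
have hDi : (#|D :\ i| <= n)%N by move: hD; rewrite (cardsD1 i D) iD.
pose h' k C := h k (i |: C) / h k (C :\ i).
have split_i A : \prod_(k | P k) h k (i |: A) =
    \prod_(k | P k) h k (A :\ i) * \prod_(k | P k && (i \in F k)) h' k A.
  by apply: prod_split_ratio => // k iFk; apply: htrace; exact: setU1_setD1_trace.
have contrib1 : \prod_(k | P k && (i \in F k)) h' k (D :\ i) = 1.
  apply: (IH _ (fun k => F k :\ i)) => //.
  - by move=> k C; rewrite mulf_neq0 ?invr_eq0.
  - move=> k C C' /setP HC; rewrite /h'; congr (_ / _); apply: htrace;
      apply/setP => x; move: (HC x); rewrite !inE;
      by case: (eqVneq x i) => //= _; rewrite !andbT.
  - move=> j C /andP[Pj iFj] /fintype.subsetP sC.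
    have sub_iC : i |: C \subset F j.
      apply/fintype.subsetP => x; rewrite !inE => /orP[/eqP->//|xC].
      by move: (sC x xC); rewrite !inE => /andP[].
    have sub_Ci : C :\ i \subset F j.
      apply/fintype.subsetP => x; rewrite !inE => /andP[_ xC].
      by move: (sC x xC); rewrite !inE => /andP[].
    by move: (split_i C); rewrite (hface j _ Pj sub_iC) (hface j _ Pj sub_Ci) mul1r.
move: (split_i (D :\ i)); rewrite contrib1 mulr1 finset.setD1K //.
have -> : (D :\ i) :\ i = D :\ i by apply/setP => x; rewrite !inE; case: (x == i).
by move=> ->; apply: (IH P F).
Qed.

Lemma prod_eq1_from_faces (F : 'I_l -> {set 'I_d}) (h : 'I_l -> {set 'I_d} -> K) :
  (forall k C, h k C != 0) ->
  (forall k C C', C :&: F k = C' :&: F k -> h k C = h k C') ->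
  (forall j (C : {set 'I_d}), C \subset F j -> \prod_k h k C = 1) ->
  forall D : {set 'I_d}, \prod_k h k D = 1.
Proof.
move=> hnz htrace hface D.
by apply: (@prod_eq1_from_faces_card #|D| predT F) => // j C _; exact: hface.
Qed.

End ProductInduction.

Section IFMFacts.
Context (R : realType) (dT : measure_display) (T : measurableType dT).
Context (mu : {measure set T -> \bar R}).
Context (m d l : nat) (Y : 'I_m -> Type) (coord : forall j : 'I_m, T -> Y j).
Context (aleph : 'I_d -> nat) (S : 'I_l -> {set 'I_m}) (F : 'I_l -> {set 'I_d}).
Context (f : 'I_l -> T -> ('I_d -> nat) -> R) (Hf : is_IFM mu coord aleph S F f).

Lemma ifm_prod_gt0 {sigma : 'I_d -> nat} (x : T) :
  in_Sigma aleph sigma -> 0 < ifm_prod f x sigma.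
Proof.
move=> Hs; apply: prodr_gt0 => k _.
by case: Hf => _ [_ [Hpos _]]; apply: Hpos.
Qed.

Lemma ifm_prod_measurable {sigma : 'I_d -> nat} :
  in_Sigma aleph sigma -> measurable_fun setT (fun x => ifm_prod f x sigma).
Proof.
move=> Hs; apply: measurable_prod => k _.
by case: Hf => _ [_ [_ [Hmeas _]]]; apply: Hmeas.
Qed.

Lemma ifm_Z_real {sigma : 'I_d -> nat} : in_Sigma aleph sigma ->
  ifm_Z mu f sigma = (fine (ifm_Z mu f sigma))%:E /\ 0 < fine (ifm_Z mu f sigma).
Proof.
move=> Hs; case: Hf => _ [_ [_ [_ HZ]]]; have [Z0 Zfin] := HZ _ Hs.
split; last by apply: fine_gt0; rewrite Z0 Zfin.
by rewrite fineK // ge0_fin_numE ?Zfin // ltW.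
Qed.

Lemma ifm_density_measurable {sigma : 'I_d -> nat} : in_Sigma aleph sigma ->
  measurable_fun setT (fun x => (ifm_density mu f sigma x)%:E).
Proof.
move=> Hs; apply/measurable_EFinP; apply: measurable_funM.
  exact: ifm_prod_measurable.
exact: measurable_cst.
Qed.

Lemma ifm_density_integrable {sigma : 'I_d -> nat} : in_Sigma aleph sigma ->
  mu.-integrable setT (fun x => (ifm_density mu f sigma x)%:E).
Proof.
move=> Hs; apply/integrableP; split; first exact: ifm_density_measurable.
have [ZE Zpos] := ifm_Z_real Hs.
rewrite (eq_integral (fun x =>
    ((fine (ifm_Z mu f sigma))^-1%:E * (ifm_prod f x sigma)%:E)%E)); last first.
  move=> x _; rewrite /ifm_density gee0_abs ?lee_fin; last first.
    by rewrite divr_ge0 // ltW // ifm_prod_gt0.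
  by rewrite -EFinM mulrC.
rewrite ge0_integralZl_EFin //; last 3 first.
- by move=> x _; rewrite lee_fin ltW // ifm_prod_gt0.
- by apply/measurable_EFinP; exact: ifm_prod_measurable.
- by rewrite invr_ge0 ltW.
by rewrite -/(ifm_Z mu f sigma) ZE -EFinM ltry.
Qed.

End IFMFacts.

Arguments ifm_prod_gt0 {R dT T mu m d l Y coord aleph S F f} Hf {sigma} x.
Arguments ifm_prod_measurable {R dT T mu m d l Y coord aleph S F f} Hf {sigma}.
Arguments ifm_Z_real {R dT T mu m d l Y coord aleph S F f} Hf {sigma}.
Arguments ifm_density_measurable {R dT T mu m d l Y coord aleph S F f} Hf {sigma}.
Arguments ifm_density_integrable {R dT T mu m d l Y coord aleph S F f} Hf {sigma}.

(* The cross ratio (p'(x)/p(x)) / (p'(y)/p(y)) of two densities agreeing at x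
   and at y is 1, whatever the (positive) normalising constants z, z'. *)
Lemma cross_ratio_eq1 {K : realFieldType} {a b c e z z' : K} :
  0 < b -> 0 < e -> 0 < z -> 0 < z' ->
  b / z = a / z' -> e / z = c / z' -> (a / b) / (c / e) = 1.
Proof.
move=> b0 e0 z0 z'0 hx hy.
have -> : a = b / z * z' by rewrite hx divfK // gt_eqF.
have -> : c = e / z * z' by rewrite hy divfK // gt_eqF.
by field; rewrite !gt_eqF.
Qed.

Definition restrict_regime {d : nat} (sigma : 'I_d -> nat) (C : {set 'I_d}) :
  'I_d -> nat := fun i => if i \in C then sigma i else 0%N.

Lemma restrict_regime_in_Sigma {d : nat} (aleph : 'I_d -> nat) (sigma : 'I_d -> nat)
    (C : {set 'I_d}) :
  (forall i, 0 < aleph i)%N -> in_Sigma aleph sigma ->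
  in_Sigma aleph (restrict_regime sigma C).
Proof. by move=> al0 Hs i; rewrite /restrict_regime; case: ifP. Qed.

Lemma restrict_regime_setT {d : nat} (sigma : 'I_d -> nat) :
  restrict_regime sigma [set: 'I_d] = sigma.
Proof. by apply: funext => i; rewrite /restrict_regime finset.in_setT. Qed.

(* A restriction to a subset of F is also a restriction to F. *)
Lemma restrict_regime_sub {d : nat} (sigma : 'I_d -> nat) {C G : {set 'I_d}} :
  C \subset G ->
  restrict_regime sigma C =
    (fun i => if i \in G then restrict_regime sigma C i else 0%N).
Proof.
move=> /fintype.subsetP CG; apply: funext => i; rewrite /restrict_regime.
by case: ifP => // iC; case: ifP => // iG; move: (CG i iC); rewrite iG.
Qed.

Section Identification.
Context (R : realType) (dT : measure_display) (T : measurableType dT).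
Context (mu : {measure set T -> \bar R}).
Context (m d l : nat) (Y : 'I_m -> Type) (coord : forall j : 'I_m, T -> Y j).
Context (aleph : 'I_d -> nat) (S : 'I_l -> {set 'I_m}) (F : 'I_l -> {set 'I_d}).
Hypothesis aleph_gt0 : forall i, (0 < aleph i)%N.
Variables (f f' : 'I_l -> T -> ('I_d -> nat) -> R).
Hypotheses (Hf : is_IFM mu coord aleph S F f) (Hf' : is_IFM mu coord aleph S F f').
Variables (sstar : 'I_d -> nat) (Hsstar : in_Sigma aleph sstar).

Local Notation tau := (restrict_regime sstar).

Let tau_in_Sigma C : in_Sigma aleph (tau C).
Proof. exact: restrict_regime_in_Sigma. Qed.

Lemma density_ae_eq_of_dist_eq {sigma : 'I_d -> nat} : in_Sigma aleph sigma ->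
  (forall A, measurable A -> ifm_dist mu f sigma A = ifm_dist mu f' sigma A) ->
  {ae mu, forall x, ifm_density mu f sigma x = ifm_density mu f' sigma x}.
Proof.
move=> Hs Hdist.
have := @integral_ae_eq _ _ _ mu setT measurableT
  (fun x => (ifm_density mu f' sigma x)%:E) (fun x => (ifm_density mu f sigma x)%:E)
  (ifm_density_integrable Hf Hs) (ifm_density_measurable Hf' Hs)
  (fun A _ mA => Hdist A mA).
by apply: filterS => x H; apply: EFin_inj; exact: H.
Qed.

Lemma factor_restrict_trace {g : 'I_l -> T -> ('I_d -> nat) -> R}
    (Hg : is_IFM mu coord aleph S F g) (k : 'I_l) (x : T) {C C' : {set 'I_d}} :
  C :&: F k = C' :&: F k -> g k x (tau C) = g k x (tau C').
Proof.
case: Hg => _ [Hdep _] /setP HC; apply: Hdep => // i iF.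
by move: (HC i); rewrite !inE iF !andbT /restrict_regime => ->.
Qed.

Definition agree_on_faces (x : T) : Prop :=
  forall C : {set 'I_d}, (exists k, C \subset F k) ->
    ifm_density mu f (tau C) x = ifm_density mu f' (tau C) x.

Lemma agree_on_faces_ae :
  (forall k (C : {set 'I_d}), C \subset F k -> forall A, measurable A ->
     ifm_dist mu f (tau C) A = ifm_dist mu f' (tau C) A) ->
  {ae mu, forall x, agree_on_faces x}.
Proof.
move=> Hface; apply: filter_forall => C.
case: (pselect (exists k, C \subset F k)) => [[k Ck]|nC].
  have := density_ae_eq_of_dist_eq (tau_in_Sigma C) (Hface k C Ck).
  by apply: filterS => x Hx _.
by apply: aeW => x /nC.
Qed.

Lemma cross_ratio_full {x y : T} : agree_on_faces x -> agree_on_faces y ->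
  ifm_prod f' x sstar / ifm_prod f x sstar = ifm_prod f' y sstar / ifm_prod f y sstar.
Proof.
move=> gx gy.
pose h k C := (f' k x (tau C) / f k x (tau C)) / (f' k y (tau C) / f k y (tau C)).
have prod_h C : \prod_k h k C =
    (ifm_prod f' x (tau C) / ifm_prod f x (tau C)) /
    (ifm_prod f' y (tau C) / ifm_prod f y (tau C)).
  by rewrite /h /ifm_prod !prodf_div.
have pos g : is_IFM mu coord aleph S F g -> forall k z C, 0 < g k z (tau C).
  by case=> _ [_ [Hpos _]] k z C; apply: Hpos.
have full : \prod_k h k [set: 'I_d] = 1.
  apply: (@prod_eq1_from_faces d l R F h).
  - by move=> k C; rewrite gt_eqF // !divr_gt0 // ?pos.
  - move=> k C C' HC.
    by rewrite /h !(factor_restrict_trace Hf k _ HC) !(factor_restrict_trace Hf' k _ HC).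
  - move=> j C sC; rewrite prod_h.
    have [_ Z0] := ifm_Z_real Hf (tau_in_Sigma C).
    have [_ Z'0] := ifm_Z_real Hf' (tau_in_Sigma C).
    have hx := gx C (ex_intro _ j sC); have hy := gy C (ex_intro _ j sC).
    by apply: (cross_ratio_eq1 _ _ Z0 Z'0 hx hy); exact: (ifm_prod_gt0 Hf).
move: full; rewrite prod_h restrict_regime_setT => full.
rewrite -[LHS](divfK (x := ifm_prod f' y sstar / ifm_prod f y sstar)) ?full ?mul1r //.
by rewrite gt_eqF // divr_gt0 // ?(ifm_prod_gt0 Hf) ?(ifm_prod_gt0 Hf').
Qed.

Lemma prod_ae_proportional : {ae mu, forall x, agree_on_faces x} ->
  exists2 c : R, 0 < c & {ae mu, forall x, ifm_prod f' x sstar = c * ifm_prod f x sstar}.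
Proof.
move=> faces.
case: (pselect (exists y, agree_on_faces y)) => [[y gy]|none]; last first.
  by exists 1 => //; apply: filterS faces => x gx; case: none; exists x.
exists (ifm_prod f' y sstar / ifm_prod f y sstar).
  by rewrite divr_gt0 // ?(ifm_prod_gt0 Hf) ?(ifm_prod_gt0 Hf').
apply: filterS faces => x gx.
by rewrite -(cross_ratio_full gx gy) divfK // gt_eqF // (ifm_prod_gt0 Hf).
Qed.

(* Proportional products give proportional normalising constants, hence
   a.e. equal densities. *)
Lemma density_ae_eq_of_proportional {c : R} : 0 < c ->
  {ae mu, forall x, ifm_prod f' x sstar = c * ifm_prod f x sstar} ->
  {ae mu, forall x, ifm_density mu f' sstar x = ifm_density mu f sstar x}.
Proof.
move=> c0 prop.
have Zprop : ifm_Z mu f' sstar = (c%:E * ifm_Z mu f sstar)%E.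
  rewrite /ifm_Z -ge0_integralZl_EFin //; last 3 first.
  - by move=> x _; rewrite lee_fin ltW // (ifm_prod_gt0 Hf).
  - by apply/measurable_EFinP; exact: (ifm_prod_measurable Hf).
  - exact: ltW.
  under [X in _ = X]eq_integral do rewrite -EFinM.
  apply: ae_eq_integral => //.
  - by apply/measurable_EFinP; exact: (ifm_prod_measurable Hf').
  - apply/measurable_EFinP; apply: measurable_funM; first exact: measurable_cst.
    exact: (ifm_prod_measurable Hf).
  - by apply: filterS prop => x -> _.
apply: filterS prop => x Px; rewrite /ifm_density Px Zprop.
have [ZE Z0] := ifm_Z_real Hf Hsstar.
by rewrite ZE -EFinM /=; field; rewrite !gt_eqF.
Qed.

Lemma dist_eq_of_density_ae_eq :
  {ae mu, forall x, ifm_density mu f' sstar x = ifm_density mu f sstar x} ->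
  forall A, measurable A -> ifm_dist mu f sstar A = ifm_dist mu f' sstar A.
Proof.
move=> dens A mA; symmetry; apply: ae_eq_integral => //.
- by apply: measurable_funTS; exact: (ifm_density_measurable Hf').
- by apply: measurable_funTS; exact: (ifm_density_measurable Hf).
- by apply: filterS dens => x -> _.
Qed.

End Identification.

Arguments agree_on_faces_ae {R dT T mu m d l Y coord aleph S F}
  aleph_gt0 {f f'} Hf Hf' {sstar}.
Arguments prod_ae_proportional {R dT T mu m d l Y coord aleph S F}
  aleph_gt0 {f f'} Hf Hf' {sstar}.
Arguments density_ae_eq_of_proportional {R dT T mu m d l Y coord aleph S F f f'}
  Hf Hf' {sstar} Hsstar {c}.
Arguments dist_eq_of_density_ae_eq {R dT T mu m d l Y coord aleph S F f f'}
  Hf Hf' {sstar}.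

Theorem theorem1 (R : realType) (dT : measure_display) (T : measurableType dT)
  (mu : {measure set T -> \bar R})
  (m d l : nat) (Y : 'I_m -> Type) (coord : forall j : 'I_m, T -> Y j)
  (aleph : 'I_d -> nat) (S : 'I_l -> {set 'I_m}) (F : 'I_l -> {set 'I_d})
  (Strain : ('I_d -> nat) -> Prop) :
  (forall i, 2 <= aleph i)%N ->
  decomposable (sigma_edge F) [set: 'I_d] ->
  (forall sigma, Strain sigma -> in_Sigma aleph sigma) ->
  (forall (k : 'I_l) (v : 'I_d -> nat),
     (forall i, i \in F k -> v i < aleph i)%N ->
     Strain (fun i => if i \in F k then v i else 0%N)) ->
  forall sigma_star, in_Sigma aleph sigma_star ->
    identified mu coord aleph S F Strain sigma_star.
Proof.
move=> aleph2 _ _ Htrain sstar Hsstar f f' Hf Hf' Heq.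
have aleph0 i : (0 < aleph i)%N by apply: leq_trans (aleph2 i).
have face_train k (C : {set 'I_d}) : C \subset F k -> Strain (restrict_regime sstar C).
  move=> CF; rewrite (restrict_regime_sub sstar CF); apply: Htrain => i _.
  exact: restrict_regime_in_Sigma.
have faces := agree_on_faces_ae aleph0 Hf Hf' Hsstar
  (fun k C CF => Heq _ (face_train k C CF)).
have [c c0 prop] := prod_ae_proportional aleph0 Hf Hf' Hsstar faces.
have dens := density_ae_eq_of_proportional Hf Hf' Hsstar c0 prop.
move=> A mA; exact (dist_eq_of_density_ae_eq Hf Hf' Hsstar dens A mA).
Qed.
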